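(* Let $n\ge 2$ and $1\le k<n$, and let $G=H_B(n,k)$. Then: (i) every vertex of $V_1$ has degree $d_{V_1}(k)=\sum_{s=1}^{k}2^{s-1}\binom{k}{s}-1+\sum_{t=1}^{n-k}2^{k+t-1}\binom{n-k}{t}=\frac{3^k-3}{2}+2^{k-1}(3^{n-k}-1)$, and there are $\binom{n}{k}$ such vertices; (ii) for $1\le r<k$, every $r$-vertex of $V_2$ has degree $\binom{n-r}{k-r}$, and there are $2^{r-1}\binom{n}{r}$ such vertices; (iii) every $k$-vertex of $V_2$ has degree $1$, and there are $(2^{k-1}-1)\binom{n}{k}$ such vertices; (iv) for $k<r\le n$, every $r$-vertex of $V_2$ has degree $\binom{r}{k}$, and there are $2^{r-1}\binom{n}{r}$ such vertices. Consequently the degree sequence of $G$ is obtained by arranging these degrees, each repeated with the stated multiplicity, in non-increasing order.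
   Context: Fix integers $n\ge 2$ and $1\le k<n$ and positive real numbers $x_1<x_2<\dots<x_n$. Let $\mathscr{B}_n=\{\pm x_1,\pm x_2,\dots,\pm x_{n-1},x_n\}$ (so $-x_n\notin\mathscr{B}_n$). Let $\phi(\mathscr{B}_n)$ be the family of all nonempty subsets $S\subseteq\mathscr{B}_n$ whose elements have pairwise distinct absolute values and whose element of largest absolute value is positive. Let $\mathscr{B}_n^+=\{x_1,\dots,x_n\}$, let $V_1$ be the set of all $k$-element subsets of $\mathscr{B}_n^+$, and let $V_2=\phi(\mathscr{B}_n)\setminus V_1$. For $A\in\phi(\mathscr{B}_n)$ put $A^\dagger=\{|a|:a\in A\}$. The bipartite Kneser B type-$k$ graph $H_B(n,k)$ is the simple graph with vertex set $V_1\cup V_2$ in which $X\in V_1$ and $Y\in V_2$ are adjacent if and only if $X\subseteq Y^\dagger$ or $Y^\dagger\subseteq X$, and there are no other edges. An $r$-vertex is a vertex having exactly $r$ elements. *)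

From HB Require Import structures.
From mathcomp Require Import all_boot all_order all_algebra.
Set Implicit Arguments. Unset Strict Implicit. Unset Printing Implicit Defensive.
Import Order.TTheory GRing.Theory Num.Theory.

(* Encoding: an element of B_n = {±x_1,...,±x_{n-1}, x_n} is a pair
   (i, s) : 'I_n * bool, denoting  x_{i+1} if s = true and -x_{i+1} if s = false.  B_n excludes the pair (n-1, false),
   i.e. -x_n. *)

Definition sval (R : realDomainType) (n : nat) (x : 'I_n -> R)
  (a : 'I_n * bool) : R := if a.2 then x a.1 else (- x a.1)%R.

Definition Bn (n : nat) : {set 'I_n * bool} :=
  [set a | a.2 || (nat_of_ord a.1 != n.-1)].

Definition Bplus (n : nat) : {set 'I_n * bool} := [set a | a.2].

Definition phiB (R : realDomainType) (n : nat) (x : 'I_n -> R)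
  : {set {set 'I_n * bool}} :=
  [set S : {set 'I_n * bool} |
    [&& S \subset Bn n, S != set0,
        [forall a in S, forall b in S,
            (`|sval x a| == `|sval x b|)%R ==> (a == b)] &
        [forall a in S,
            [forall b in S, (`|sval x b| <= `|sval x a|)%R] ==> (0 < sval x a)%R]]].

Definition V1 (n k : nat) : {set {set 'I_n * bool}} :=
  [set S : {set 'I_n * bool} | (S \subset Bplus n) && (#|S| == k)].

Definition V2 (R : realDomainType) (n k : nat) (x : 'I_n -> R)
  : {set {set 'I_n * bool}} := phiB x :\: V1 n k.

Definition dagger (R : realDomainType) (n : nat) (x : 'I_n -> R)
  (A : {set 'I_n * bool}) : {set 'I_n * bool} :=
  [set b in Bplus n | [exists a in A, (sval x b == `|sval x a|)%R]].

Definition HBcond (R : realDomainType) (n : nat) (x : 'I_n -> R)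
  (X Y : {set 'I_n * bool}) : bool :=
  (X \subset dagger x Y) || (dagger x Y \subset X).

Definition HBvert (R : realDomainType) (n k : nat) (x : 'I_n -> R)
  : {set {set 'I_n * bool}} := V1 n k :|: V2 k x.

Definition HBadj (R : realDomainType) (n k : nat) (x : 'I_n -> R)
  : rel {set 'I_n * bool} := fun X Y =>
  [&& X \in V1 n k, Y \in V2 k x & HBcond x X Y] ||
  [&& Y \in V1 n k, X \in V2 k x & HBcond x Y X].

Definition HBdeg (R : realDomainType) (n k : nat) (x : 'I_n -> R)
  (X : {set 'I_n * bool}) : nat :=
  #|[set Y in HBvert k x | HBadj k x X Y]|.

Definition dV2 (n k r : nat) : nat :=
  if (r < k)%N then 'C(n - r, k - r) else if r == k then 1%N else 'C(r, k).
Definition mV2 (n k r : nat) : nat :=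
  if r == k then ((2 ^ (k - 1) - 1) * 'C(n, k))%N else (2 ^ (r - 1) * 'C(n, r))%N.

Definition dV1 (n k : nat) : nat :=
  ((3 ^ k - 3) %/ 2 + 2 ^ (k - 1) * (3 ^ (n - k) - 1))%N.

Definition claimed_degrees (n k : nat) : seq nat :=
  nseq 'C(n, k) (dV1 n k) ++ flatten [seq nseq (mV2 n k r) (dV2 n k r) | r <- iota 1 n].

From Pilot Require Import Defs.
From HB Require Import structures.
From mathcomp Require Import all_boot all_order all_algebra.
Import Order.TTheory GRing.Theory Num.Theory.
From mathcomp Require Import zify ring.
Set Implicit Arguments. Unset Strict Implicit. Unset Printing Implicit Defensive.

(* Since 0 < x_1 < ... < x_n, whether a signed set lies in phi(B_n) depends only on the
   indices and signs of its elements, and A^dagger simply forgets the signs.  Above each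
   nonempty D included in B_n^+ lie exactly 2^(|D|-1) members of phi(B_n): the element of
   largest index must be positive, every other sign is free.  A k-set X of V_1 is adjacent
   to every member of phi(B_n) whose dagger is a subset or a superset of X, except X
   itself; summing 2^(|D|-1) over the subsets and over the supersets of X gives (i).  A
   vertex A of V_2 is adjacent to the k-subsets of B_n^+ comparable with A^dagger, i.e.
   to its k-supersets, to A^dagger itself, or to its k-subsets, according as |A| is
   smaller than, equal to or larger than k. *)

Section SubsetSums.
Variable T : finType.
Implicit Types A B D W X : {set T}.

Definition nested A B := (A \subset B) || (B \subset A).

Lemma nested_card_eq A B : #|A| = #|B| -> nested A B -> A = B.
Proof.
move=> AB /orP[] sub; apply/eqP; first by rewrite eqEcard sub AB leqnn.
by rewrite eq_sym eqEcard sub AB leqnn.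
Qed.

Lemma nestedC A B : nested A B = nested B A.
Proof. exact: orbC. Qed.

Lemma nested_card_lt A B : #|A| < #|B| -> nested A B = (A \subset B).
Proof.
move=> AB; rewrite /nested; case: (boolP (B \subset A)) => [/subset_leq_card|]; rewrite ?orbF //.
by rewrite leqNgt AB.
Qed.

Lemma sum_card_subsets A (F : nat -> nat) :
  \sum_(D : {set T} | D \subset A) F #|D| = \sum_(0 <= s < #|A|.+1) F s * 'C(#|A|, s).
Proof.
rewrite big_mkord (partition_big (fun D => inord #|D| : 'I_#|A|.+1) xpredT) //=.
apply: eq_bigr => s _.
have -> : 'C(#|A|, s) = #|[set D : {set T} | D \subset A & #|D| == s]| by rewrite cards_draws.
rewrite mulnC -sum_nat_const.
apply: eq_big => [D|D /andP[DA /eqP <-]]; last by rewrite inordK // ltnS subset_leq_card.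
rewrite inE; case: (boolP (D \subset A)) => //= DA.
by rewrite -val_eqE /= inordK // ltnS subset_leq_card.
Qed.

Lemma sum_card_supersets X B (F : nat -> nat) : X \subset B ->
  \sum_(D : {set T} | (X \subset D) && (D \subset B)) F #|D| =
  \sum_(W : {set T} | W \subset B :\: X) F (#|X| + #|W|).
Proof.
move=> XB.
rewrite (reindex_onto (fun W => X :|: W) (fun D => D :\: X)) /=; last first.
  by move=> D /andP[XD _]; rewrite -{2}(setID D X) (setIidPr XD).
apply: eq_big => [W|W /andP[_ /eqP WX]].
  rewrite subsetUl subUset XB setDUl setDv set0U subsetD /=.
  by congr (_ && _); apply/eqP/setDidPl.
rewrite /= setDUl setDv set0U in WX.
have /disjoint_setI0 XW : [disjoint X & W] by rewrite disjoint_sym; apply/setDidPl.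
by rewrite cardsU XW cards0 subn0.
Qed.

Lemma card_supersets X B s : X \subset B -> #|X| <= s ->
  #|[set D : {set T} | (X \subset D) && (D \subset B) & #|D| == s]| = 'C(#|B| - #|X|, s - #|X|).
Proof.
move=> XB Xs; have -> : #|B| - #|X| = #|B :\: X| by rewrite cardsD (setIidPr XB).
rewrite -cards_draws -[LHS]sum1_card -[RHS]sum1_card.
rewrite (eq_bigl (fun D => ((X \subset D) && (D \subset B)) && (#|D| == s))) => [|D];
  last by rewrite inE.
rewrite big_mkcondr (sum_card_supersets (fun d => if d == s then 1 else 0) XB) /=.
rewrite [RHS](eq_bigl (fun W => (W \subset B :\: X) && (#|W| == s - #|X|))) => [|W];
  last by rewrite inE.
by rewrite big_mkcondr; apply: eq_bigr => W _; rewrite -[#|W| == _](eqn_add2l #|X|) subnKC.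
Qed.

Lemma sum_nested X B (F : nat -> nat) : X \subset B ->
  \sum_(D : {set T} | (D \subset B) && nested X D) F #|D| + F #|X| =
  \sum_(D : {set T} | D \subset X) F #|D|
  + \sum_(D : {set T} | (X \subset D) && (D \subset B)) F #|D|.
Proof.
move=> XB; rewrite (bigID (fun D => D \subset X)) /= -addnA; congr (_ + _).
  apply: eq_bigl => D; case DX: (D \subset X); rewrite ?andbT ?andbF //.
  by rewrite /nested DX orbT (subset_trans DX XB).
rewrite [in RHS](bigD1 X) /=; last by rewrite subxx.
rewrite addnC; congr (_ + _); apply: eq_bigl => D; rewrite /nested eqEsubset.
by case: (D \subset X); case: (X \subset D); case: (D \subset B).
Qed.

End SubsetSums.

Lemma perm_eq_class_values (T : finType) (A : {set T}) (f c : T -> nat)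
    (g mu : nat -> nat) (s : seq nat) :
  uniq s -> {in A, forall v, c v \in s} -> {in A, forall v, f v = g (c v)} ->
  {in s, forall r, #|[set v in A | c v == r]| = mu r} ->
  perm_eq [seq f v | v <- enum A] (flatten [seq nseq (mu r) (g r) | r <- s]).
Proof.
move=> s_uniq cA fA card_class; apply/permP => p.
rewrite count_flatten -map_comp sumnE big_map count_map -sum1_count big_mkcond big_enum /=.
transitivity (\sum_(v in A) \sum_(r <- s | c v == r) (if p (f v) then 1 else 0)).
  apply: eq_bigr => v vA; rewrite -big_filter.
  rewrite (eq_filter (a2 := pred1 (c v))) => [|r]; last by rewrite eq_sym.
  by rewrite filter_pred1_uniq ?cA ?big_seq1.
rewrite (exchange_big_dep xpredT) //=; apply: eq_big_seq => r rs.
rewrite count_nseq -card_class // (eq_bigr (fun _ => p (g r) : nat)); last first.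
  by move=> v /andP[vA /eqP <-]; rewrite fA //; case: p.
by rewrite sum_nat_cond_const mulnC; congr (_ * #|_|); apply/setP => v; rewrite !inE.
Qed.

Definition unsign {n} (a : 'I_n * bool) := (a.1, true).
Definition flip {n} (a : 'I_n * bool) := (a.1, ~~ a.2).

Definition admissible n (S : {set 'I_n * bool}) :=
  [&& S != set0,
      [forall a in S, forall b in S, (a.1 == b.1) ==> (a == b)] &
      [forall a in S, [forall b in S, (b.1 <= a.1)%N] ==> a.2]].

Section Signs.
Variable n : nat.
Implicit Types (a b : 'I_n * bool) (S D N X : {set 'I_n * bool}).

Lemma mem_Bplus a : (a \in Bplus n) = a.2.
Proof. by rewrite inE. Qed.

Lemma unsign_Bplus a : a \in Bplus n -> unsign a = a.
Proof. by case: a => i [] //; rewrite mem_Bplus. Qed.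

Lemma unsign_inj_Bplus : {in Bplus n &, forall a b, a.1 = b.1 -> a = b}.
Proof. by move=> [i s] [j t]; rewrite !mem_Bplus /= => -> -> ->. Qed.

Lemma card_Bplus : #|Bplus n| = n.
Proof.
have -> : Bplus n = [set (i, true) | i : 'I_n].
  apply/setP => -[i s]; rewrite mem_Bplus; apply/idP/imsetP => [/= ->|[j _ [_ ->]]] //.
  by exists i.
by rewrite card_imset ?card_ord // => i j [].
Qed.

Lemma unsign_subset S : unsign @: S \subset Bplus n.
Proof. by apply/subsetP => _ /imsetP[a _ ->]; rewrite mem_Bplus. Qed.

Lemma imset_unsign_Bplus X : X \subset Bplus n -> unsign @: X = X.
Proof.
move=> /subsetP XB; rewrite -[RHS]imset_id; apply: eq_in_imset => a aX.
exact/unsign_Bplus/XB.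
Qed.

Lemma admissible_inj S : admissible S -> {in S &, forall a b, a.1 = b.1 -> a = b}.
Proof.
case/and3P => _ /forall_inP inj _ a b aS bS ab.
by apply/eqP; move: (forall_inP (inj a aS) b bS); rewrite ab eqxx.
Qed.

Lemma card_unsign S : admissible S -> #|unsign @: S| = #|S|.
Proof. by move=> adm; rewrite card_in_imset // => a b aS bS [] /(admissible_inj adm); apply. Qed.

Lemma admissible_Bplus X : X \subset Bplus n -> X != set0 -> admissible X.
Proof.
move=> /subsetP XB ne; apply/and3P; split=> //.
  apply/forall_inP => a aX; apply/forall_inP => b bX; apply/implyP => /eqP ab.
  by rewrite (unsign_inj_Bplus (XB a aX) (XB b bX) ab).
by apply/forall_inP => a aX; apply/implyP => _; rewrite -mem_Bplus XB.
Qed.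

Lemma flipK : involutive (@flip n).
Proof. by case=> i s; rewrite /flip negbK. Qed.

Lemma unsign_flip a : unsign (flip a) = unsign a.
Proof. by []. Qed.

Definition negate D N := (D :\: N) :|: flip @: N.

Lemma mem_negate D N a : D \subset Bplus n -> N \subset D ->
  (a \in negate D N) = (unsign a \in D) && (a.2 == (unsign a \notin N)).
Proof.
move=> /subsetP DB /subsetP ND; rewrite !inE (can_imset_pre _ flipK) inE.
case: a => i [] /=; rewrite /unsign /flip /=.
  case: ((i, false) \in N) / boolP => [/ND/DB|_]; first by rewrite mem_Bplus.
  by rewrite orbF andbC; case: ((i, true) \in N).
case: ((i, false) \in D) / boolP => [/DB|_]; first by rewrite mem_Bplus.
rewrite andbF /=; case: ((i, true) \in N) / boolP => [/ND ->|] //.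
by rewrite andbF.
Qed.

Section Fiber.
Variables (D : {set 'I_n * bool}) (m : 'I_n * bool).
Hypotheses (DB : D \subset Bplus n) (mD : m \in D).
Hypothesis m_max : forall b, b \in D -> (b.1 <= m.1)%N.

Let m_pos : m.2. Proof. by rewrite -mem_Bplus (subsetP DB). Qed.

Lemma negate_admissible N : N \subset D :\ m -> admissible (negate D N).
Proof.
move=> NDm; have ND : N \subset D by rewrite (subset_trans NDm) ?subD1set.
have mN : m \notin N by apply/negP => /(subsetP NDm); rewrite setD11.
have unsignD a : a \in negate D N -> unsign a \in D by rewrite mem_negate // => /andP[].
have m_negate : m \in negate D N.
  by rewrite mem_negate // unsign_Bplus ?(subsetP DB) // mD mN m_pos.
apply/and3P; split; first by apply/set0Pn; exists m.
  apply/forall_inP => -[i s] aS; apply/forall_inP => -[j t] bS; apply/implyP => /= /eqP ij.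
  move: aS bS; rewrite !mem_negate // /unsign /= ij => /andP[_ /eqP ->] /andP[_ /eqP ->] //.
apply/forall_inP => a aS; apply/implyP => /forall_inP/(_ m m_negate) ma.
have am : unsign a = m.
  apply: unsign_inj_Bplus; rewrite ?(subsetP DB) ?unsignD //.
  by apply/val_inj/anti_leq; rewrite ma (m_max (unsignD a aS)).
by move: aS; rewrite mem_negate // am mN => /andP[_ /eqP ->].
Qed.

Lemma unsign_negate N : N \subset D -> unsign @: negate D N = D.
Proof.
move=> ND; apply/setP => b; apply/imsetP/idP => [[a] | bD].
  by rewrite mem_negate // => /andP[aD _] ->.
have bB : b \in Bplus n by rewrite (subsetP DB).
exists (b.1, b \notin N); last by rewrite -{1}(unsign_Bplus bB).
by rewrite mem_negate // /unsign /= -/(unsign b) (unsign_Bplus bB) bD /=.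
Qed.

Lemma negate_inj : {in powerset D &, injective (negate D)}.
Proof.
have mem_flip N b : N \subset D -> b \in Bplus n -> (flip b \in negate D N) = (b \in N).
  move=> ND bB; have b2 : b.2 by rewrite -mem_Bplus.
  rewrite mem_negate // unsign_flip (unsign_Bplus bB) /= b2.
  by case: (boolP (b \in N)) => [/(subsetP ND) ->|]; rewrite ?andbF.
move=> N1 N2; rewrite !inE => N1D N2D e; apply/setP => b.
case: (boolP (b \in Bplus n)) => bB.
  by rewrite -(mem_flip N1) -1?(mem_flip N2) ?e.
by apply/idP/idP => [/(subsetP N1D)|/(subsetP N2D)] /(subsetP DB); rewrite (negbTE bB).
Qed.

Lemma negate_onto S : admissible S -> unsign @: S = D ->
  exists2 N : {set 'I_n * bool}, N \subset D :\ m & S = negate D N.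
Proof.
move=> adm SD; have unsignS a : a \in S -> unsign a \in D by rewrite -SD => /imset_f.
exists [set b in D | flip b \in S].
  apply/subsetP => b; rewrite !inE => /andP[bD fbS]; rewrite bD andbT.
  apply: contraTneq fbS => ->; apply/negP => fmS.
  suff : ~~ m.2 by rewrite m_pos.
  case/and3P: adm => _ _ /forall_inP/(_ _ fmS)/implyP; apply.
  by apply/forall_inP => c /unsignS/m_max.
have ND : [set b in D | flip b \in S] \subset D by apply/subsetP => b; rewrite inE => /andP[].
apply/setP => -[i s]; rewrite mem_negate // inE /unsign /flip /= andbC.
have tD_of (t : bool) : (i, t) \in S -> (i, true) \in D := unsignS (i, t).
case: s; case fS: ((i, false) \in S); case tD: ((i, true) \in D) => //=.
- by apply/negP => tS; have := admissible_inj adm tS fS erefl.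
- by rewrite (tD_of _ fS) in tD.
- by move: tD; rewrite -SD => /imsetP[[j []] jS [ij]]; move: fS; rewrite ij ?jS.
- by apply/negP => /tD_of; rewrite tD.
- by rewrite (tD_of _ fS) in tD.
Qed.

End Fiber.

Lemma card_fiber D : D \subset Bplus n -> D != set0 ->
  #|[set S | admissible S & unsign @: S == D]| = 2 ^ (#|D| - 1).
Proof.
move=> DB /set0Pn[m0 m0D].
case: (arg_maxnP (fun b : 'I_n * bool => val b.1) m0D) => m mD m_max.
have -> : [set S | admissible S & unsign @: S == D] = negate D @: powerset (D :\ m).
  apply/setP => S; rewrite inE; apply/andP/imsetP => [[adm /eqP SD]|[N]].
    by have [N NDm ->] := negate_onto DB mD m_max adm SD; exists N; rewrite ?inE.
  rewrite inE => NDm ->; have ND := subset_trans NDm (subD1set D m).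
  by rewrite (negate_admissible DB mD m_max NDm) unsign_negate.
rewrite card_in_imset; first by rewrite card_powerset (cardsD1 m D) (mD : m \in D) add1n subn1.
move=> N1 N2; rewrite !inE => N1D N2D; apply: negate_inj => //; rewrite inE.
  exact: subset_trans N1D (subD1set D m).
exact: subset_trans N2D (subD1set D m).
Qed.

End Signs.

Lemma card_admissible_unsign n (P : pred {set 'I_n * bool}) :
  #|[set S | admissible S & P (unsign @: S)]| =
  \sum_(D : {set 'I_n * bool} | [&& D \subset Bplus n, D != set0 & P D]) 2 ^ (#|D| - 1).
Proof.
rewrite -sum1_card (eq_bigl (fun S => admissible S && P (unsign @: S))) => [|S];
  last by rewrite inE.
rewrite (partition_big (fun S : {set 'I_n * bool} => unsign @: S)
  (fun D => [&& D \subset Bplus n, D != set0 & P D])) => [|S].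
  apply: eq_bigr => D /and3P[DB D0 PD]; rewrite -(card_fiber DB D0) -sum1_card.
  apply: eq_bigl => S; rewrite inE -andbA.
  by case: (unsign @: S =P D) => [->|]; rewrite ?PD ?andbF.
by case/andP => /and3P[S0 _ _] PS; rewrite unsign_subset imset_eq0 S0.
Qed.

Lemma card_admissible_size n r : 0 < r ->
  #|[set S : {set 'I_n * bool} | admissible S & #|S| == r]| = 2 ^ (r - 1) * 'C(n, r).
Proof.
move=> r_gt0; transitivity #|[set S : {set 'I_n * bool} | admissible S & #|unsign @: S| == r]|.
  by apply: eq_card => S; rewrite !inE; case: (boolP (admissible S)) => // /card_unsign ->.
rewrite (card_admissible_unsign (fun D => #|D| == r)) (eq_bigr (fun _ => 2 ^ (r - 1)))
  => [|D /and3P[_ _ /eqP ->]] //.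
have := cards_draws (Bplus n) r; rewrite card_Bplus => <-.
rewrite sum_nat_cond_const mulnC; congr (_ * _); apply: eq_card => D; rewrite !inE.
case: (boolP (#|D| == r)) => Dr; rewrite ?andbF ?andbT //.
by rewrite -card_gt0 (eqP Dr) r_gt0 andbT.
Qed.

Lemma binomial_sum_pow2 m : 2 * \sum_(1 <= s < m.+1) 2 ^ (s - 1) * 'C(m, s) = 3 ^ m - 1.
Proof.
rewrite (_ : 3 = 1 + 2) // expnDn -(big_mkord xpredT (fun i => 'C(m, i) * (1 ^ (m - i) * 2 ^ i))).
rewrite [in RHS]big_ltn // bin0 exp1n expn0 !mul1n addKn big_distrr /=.
apply: eq_big_nat => s /andP[s1 _].
by rewrite exp1n mul1n mulnA -expnS subn1 prednK // mulnC.
Qed.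

Lemma dV1E n k : 1 <= k ->
  \sum_(1 <= s < k.+1) 2 ^ (s - 1) * 'C(k, s) - 1
  + \sum_(1 <= t < (n - k).+1) 2 ^ (k + t - 1) * 'C(n - k, t) = dV1 n k.
Proof.
move=> k_gt0; rewrite /dV1; set a := \sum_(1 <= s < k.+1) _.
have a3 := binomial_sum_pow2 k; rewrite -/a in a3.
congr (_ + _).
  have -> : 3 ^ k - 3 = 2 * (a - 1) by rewrite mulnBr a3 muln1; lia.
  by rewrite mulKn.
rewrite -binomial_sum_pow2 big_distrr mulnC big_distrl /=.
apply: eq_big_nat => t /andP[t1 _].
have -> : k + t - 1 = (k - 1) + (t - 1) + 1 by lia.
by rewrite !expnD expn1; ring.
Qed.

Section Reduction.
Variables (R : realDomainType) (n : nat) (x : 'I_n -> R).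
Hypothesis x_gt0 : forall i : 'I_n, (0 < x i)%R.
Hypothesis x_incr : forall i j : 'I_n, (i < j)%N -> (x i < x j)%R.

Lemma x_leE (i j : 'I_n) : (x i <= x j)%R = (i <= j)%N.
Proof.
case: (ltngtP i j) => [ij|ji|/val_inj ->]; last exact: lexx.
- by rewrite ltW ?x_incr.
- by apply/negbTE; rewrite -ltNge x_incr.
Qed.

Lemma x_eqE (i j : 'I_n) : (x i == x j) = (i == j).
Proof. by rewrite eq_le !x_leE -eqn_leq. Qed.

Lemma norm_sval a : `|Defs.sval x a|%R = x a.1.
Proof. by rewrite /Defs.sval; case: a.2; rewrite ?normrN gtr0_norm. Qed.

Lemma sval_gt0 a : (0 < Defs.sval x a)%R = a.2.
Proof.
rewrite /Defs.sval; case: a.2; first exact: x_gt0.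
by apply/negbTE; rewrite -leNgt oppr_le0 ltW.
Qed.

Lemma phiBE S : (S \in phiB x) = admissible S.
Proof.
rewrite inE /admissible.
have -> : [forall a in S, forall b in S,
    (`|Defs.sval x a| == `|Defs.sval x b|)%R ==> (a == b)] =
  [forall a in S, forall b in S, (a.1 == b.1) ==> (a == b)].
  apply: eq_forallb => a; congr (_ ==> _); apply: eq_forallb => b.
  by rewrite !norm_sval x_eqE.
have -> : [forall a in S, [forall b in S,
    (`|Defs.sval x b| <= `|Defs.sval x a|)%R] ==> (0 < Defs.sval x a)%R] =
  [forall a in S, [forall b in S, (b.1 <= a.1)%N] ==> a.2].
  apply: eq_forallb => a; rewrite sval_gt0; do 2 congr (_ ==> _).
  by apply: eq_forallb => b; rewrite !norm_sval x_leE.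
apply/and4P/and3P => [[]|[ne inj top]]; first by [].
split=> //; apply/subsetP => a aS; rewrite inE; case: (boolP a.2) => //= neg_a.
apply: contraTneq (implyP (forallP top a) aS) => a_last; rewrite (negbTE neg_a) implybF negbK.
apply/forallP => b; apply/implyP => _.
by rewrite a_last -ltnS prednK ?ltn_ord //; case: (b.1) => i /=; case: n.
Qed.

Lemma daggerE S : dagger x S = unsign @: S.
Proof.
apply/setP => b; rewrite !inE; apply/andP/imsetP => [[b2 /existsP[a /andP[aS]]]|[a aS ->]].
  rewrite norm_sval /Defs.sval b2 x_eqE => /eqP ea; exists a => //.
  by case: b b2 ea => ? [] //= _ ->.
by split=> //; apply/existsP; exists a; rewrite aS norm_sval /Defs.sval /=.
Qed.

End Reduction.

Section HBGraph.
Variables (R : realDomainType) (n k : nat) (x : 'I_n -> R).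
Hypothesis x_gt0 : forall i : 'I_n, (0 < x i)%R.
Hypothesis x_incr : forall i j : 'I_n, (i < j)%N -> (x i < x j)%R.
Hypothesis k_gt0 : (0 < k)%N.
Implicit Types (X Y : {set 'I_n * bool}).

Lemma V2E Y : (Y \in V2 k x) = admissible Y && (Y \notin V1 n k).
Proof. by rewrite inE (phiBE x_gt0 x_incr) andbC. Qed.

Lemma V1_admissible X : X \in V1 n k -> admissible X.
Proof. by rewrite inE => /andP[XB /eqP Xk]; rewrite admissible_Bplus // -card_gt0 Xk. Qed.

Lemma card_V1 : #|V1 n k| = 'C(n, k).
Proof. by rewrite cards_draws card_Bplus. Qed.

Lemma HBadjE X Y : HBadj k x X Y =
  [&& X \in V1 n k, Y \in V2 k x & nested X (unsign @: Y)] ||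
  [&& Y \in V1 n k, X \in V2 k x & nested Y (unsign @: X)].
Proof. by rewrite /HBadj /HBcond !(daggerE x_gt0 x_incr). Qed.

Lemma neighbours_V1 X : X \in V1 n k ->
  [set Y in HBvert k x | HBadj k x X Y] =
  [set S | admissible S & nested X (unsign @: S)] :\ X.
Proof.
move=> XV1; have XB : X \subset Bplus n by move: XV1; rewrite inE => /andP[].
apply/setP => Y; rewrite in_setD1 [LHS]in_set [in RHS]in_set.
rewrite HBadjE XV1 (V2E X) XV1 /= andbF andFb andbF orbF /HBvert in_setU V2E.
case: (boolP (admissible Y)) => admY; rewrite ?andbF //=.
case: (boolP (nested X (unsign @: Y))) => nXY; rewrite ?andbF ?andbT //=.
case: (boolP (Y \in V1 n k)) => YV1 /=; last by apply/esym; apply: contraNneq YV1 => ->.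
move: YV1 XV1 nXY; rewrite !inE => /andP[YB /eqP Yk] /andP[_ /eqP Xk].
by rewrite imset_unsign_Bplus // => /nested_card_eq ->; rewrite ?eqxx ?Xk.
Qed.

Lemma HBdeg_V1 X : X \in V1 n k ->
  (HBdeg k x X).+1 =
  \sum_(D : {set 'I_n * bool} | [&& D \subset Bplus n, D != set0 & nested X D]) 2 ^ (#|D| - 1).
Proof.
move=> XV1; have XB : X \subset Bplus n by move: XV1; rewrite inE => /andP[].
rewrite -card_admissible_unsign /HBdeg neighbours_V1 // [in RHS](cardsD1 X) inE.
by rewrite V1_admissible // imset_unsign_Bplus // /nested subxx.
Qed.

Lemma deg_V1 X : X \in V1 n k ->
  HBdeg k x X =
    \sum_(1 <= s < k.+1) 2 ^ (s - 1) * 'C(k, s) - 1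
    + \sum_(1 <= t < (n - k).+1) 2 ^ (k + t - 1) * 'C(n - k, t).
Proof.
move=> XV1; move: (XV1); rewrite inE => /andP[XB /eqP Xk].
set F := fun d => 2 ^ (d - 1).
have drop_set0 : \sum_(D : {set 'I_n * bool} | (D \subset Bplus n) && nested X D) F #|D| =
    F 0 + \sum_(D : {set 'I_n * bool} | [&& D \subset Bplus n, D != set0 & nested X D]) F #|D|.
  rewrite (bigD1 set0) /=; last by rewrite /nested !sub0set orbT.
  rewrite [X in F X]cards0; congr (_ + _).
  by apply: eq_bigl => D; rewrite -andbA [nested _ _ && _]andbC.
have below : \sum_(D : {set 'I_n * bool} | D \subset X) F #|D| =
    F 0 + \sum_(1 <= s < k.+1) 2 ^ (s - 1) * 'C(k, s).
  by rewrite sum_card_subsets Xk big_ltn // bin0 muln1.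
have above : \sum_(D : {set 'I_n * bool} | (X \subset D) && (D \subset Bplus n)) F #|D| =
    F k + \sum_(1 <= t < (n - k).+1) 2 ^ (k + t - 1) * 'C(n - k, t).
  have BX : #|Bplus n :\: X| = n - k by rewrite cardsD (setIidPr XB) card_Bplus Xk.
  rewrite sum_card_supersets // (sum_card_subsets _ (fun t => F (#|X| + t))) BX Xk.
  by rewrite big_ltn // addn0 bin0 muln1.
have A_gt0 : 0 < \sum_(1 <= s < k.+1) 2 ^ (s - 1) * 'C(k, s).
  by rewrite big_ltn // bin1 subnn expn0 mul1n ltn_addr.
have := sum_nested F XB; rewrite drop_set0 below above -HBdeg_V1 // Xk; lia.
Qed.

Lemma neighbours_V2 Y : Y \in V2 k x ->
  [set X in HBvert k x | HBadj k x Y X] =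
  [set X : {set 'I_n * bool} | [&& X \subset Bplus n, #|X| == k & nested X (unsign @: Y)]].
Proof.
move=> YV2; have YV1 : Y \notin V1 n k by move: YV2; rewrite V2E => /andP[].
apply/setP => X; rewrite [LHS]in_set [RHS]in_set HBadjE YV2 (negbTE YV1) /= andbA.
have -> : (X \in HBvert k x) && (X \in V1 n k) = (X \in V1 n k).
  by rewrite /HBvert in_setU; case: (X \in V1 n k); rewrite ?andbF.
by rewrite inE -andbA.
Qed.

Lemma deg_V2 Y : Y \in V2 k x -> HBdeg k x Y = dV2 n k #|Y|.
Proof.
move=> YV2; rewrite /HBdeg neighbours_V2 // /dV2.
have admY : admissible Y by move: YV2; rewrite V2E => /andP[].
rewrite -(card_unsign admY); set D := unsign @: Y.
have DB : D \subset Bplus n := unsign_subset Y.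
case: ltngtP => [Dk|kD|Dk].
- have := card_supersets DB (ltnW Dk); rewrite card_Bplus => <-.
  apply: eq_card => X; rewrite !inE andbCA; case: eqP => /= Xk; rewrite ?andbF //.
  by rewrite nestedC nested_card_lt ?Xk // andbT andbC.
- rewrite -cards_draws; apply: eq_card => X; rewrite !inE andbCA.
  case: eqP => /= Xk; rewrite ?andbF //.
  rewrite nested_card_lt ?Xk //; case: (boolP (X \subset D)) => [XD|]; rewrite ?andbF //.
  by rewrite (subset_trans XD DB).
- rewrite -(cards1 D); apply: eq_card => X; rewrite !inE.
  apply/idP/eqP => [/and3P[_ /eqP Xk /nested_card_eq ->] //|->]; first by rewrite Xk.
  by rewrite DB -Dk eqxx /nested subxx.
Qed.

Lemma V2_card_bounds Y : Y \in V2 k x -> 0 < #|Y| <= n.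
Proof.
rewrite V2E => /andP[admY _]; rewrite -(card_unsign admY) card_gt0 imset_eq0.
by case/and3P: admY => -> _ _; rewrite -[X in _ <= X]card_Bplus subset_leq_card ?unsign_subset.
Qed.

Lemma card_V2_of_size r : 0 < r -> #|[set Y in V2 k x | #|Y| == r]| = mV2 n k r.
Proof.
move=> r_gt0; rewrite /mV2 -(card_admissible_size n r_gt0).
case: eqP => [-> | rk].
  have V1sub : V1 n k \subset [set S | admissible S & #|S| == k].
    by apply/subsetP => X XV1; rewrite inE V1_admissible //; move: XV1; rewrite inE => /andP[].
  rewrite mulnBl mul1n -(card_admissible_size n k_gt0) -card_V1 -(setIidPr V1sub) -cardsD.
  by apply: eq_card => Y; rewrite [LHS]in_set !in_setD (phiBE x_gt0 x_incr) !inE -andbA.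
apply: eq_card => Y; rewrite [LHS]in_set [RHS]in_set V2E -andbA; congr (_ && _).
by case: (#|Y| =P r) => [Yr|]; rewrite ?andbF // andbT inE Yr (introF eqP rk) andbF.
Qed.

Lemma perm_eq_HBdeg :
  perm_eq [seq HBdeg k x v | v <- enum (HBvert k x)] (claimed_degrees n k).
Proof.
pose c v := if v \in V1 n k then 0 else #|v|.
pose g r := if r == 0 then dV1 n k else dV2 n k r.
pose mu r := if r == 0 then 'C(n, k) else mV2 n k r.
have V2_c v : v \in V2 k x -> c v = #|v| /\ 0 < #|v| <= n.
  by move=> vV2; move: (vV2); rewrite V2E /c => /andP[_ /negbTE ->]; split=> //; apply: V2_card_bounds.
have -> : claimed_degrees n k = flatten [seq nseq (mu r) (g r) | r <- iota 0 n.+1].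
  rewrite /claimed_degrees /=; congr (_ ++ flatten _).
  by apply/eq_in_map => r; rewrite mem_iota /mu /g => /andP[/gtn_eqF -> _].
apply: (perm_eq_class_values (c := c)) => [|v|v|r]; first exact: iota_uniq.
- rewrite /HBvert in_setU mem_iota add0n ltnS.
  case: (boolP (v \in V1 n k)) => [vV1|_ /= /V2_c[-> /andP[_ //]]].
  by rewrite /c vV1.
- rewrite /HBvert in_setU /g.
  case: (boolP (v \in V1 n k)) => [vV1 _|_ /= /[dup] vV2 /V2_c[-> /andP[/gtn_eqF -> _]]].
    by rewrite /c vV1 eqxx (deg_V1 vV1) dV1E.
  exact: deg_V2.
rewrite mem_iota /mu; case: eqP => [-> _|/eqP r0 _].
  rewrite -card_V1; apply: eq_card => v; rewrite inE /HBvert in_setU.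
  case: (boolP (v \in V1 n k)) => [vV1|vV1 /=]; first by rewrite /c vV1.
  by case: (boolP (v \in V2 k x)) => // /V2_c[-> /andP[/gtn_eqF ->]].
rewrite -card_V2_of_size ?lt0n //; apply: eq_card => v.
rewrite [LHS]in_set [RHS]in_set /HBvert in_setU /c.
case: (boolP (v \in V1 n k)) => vV1 //=.
by rewrite eq_sym (negbTE r0) V2E vV1 andbF.
Qed.

End HBGraph.

Theorem mainTheorem10 (R : realDomainType) (n k : nat) (x : 'I_n -> R)
  (hpos : forall i : 'I_n, (0 < x i)%R)
  (hinc : forall i j : 'I_n, (i < j)%N -> (x i < x j)%R)
  (hn : (2 <= n)%N) (hk1 : (1 <= k)%N) (hkn : (k < n)%N) :
  (* (i) *)
  ((forall X, X \in V1 n k ->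
      HBdeg k x X =
        (\sum_(1 <= s < k.+1) 2 ^ (s - 1) * 'C(k, s) - 1
         + \sum_(1 <= t < (n - k).+1) 2 ^ (k + t - 1) * 'C(n - k, t))%N
      /\ HBdeg k x X = dV1 n k)
   /\ #|V1 n k| = 'C(n, k))
  (* (ii) *)
  /\ (forall r, (1 <= r)%N -> (r < k)%N ->
        (forall Y, Y \in V2 k x -> #|Y| = r -> HBdeg k x Y = 'C(n - r, k - r))
        /\ #|[set Y in V2 k x | #|Y| == r]| = (2 ^ (r - 1) * 'C(n, r))%N)
  (* (iii) *)
  /\ ((forall Y, Y \in V2 k x -> #|Y| = k -> HBdeg k x Y = 1%N)
        /\ #|[set Y in V2 k x | #|Y| == k]| = ((2 ^ (k - 1) - 1) * 'C(n, k))%N)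
  (* (iv) *)
  /\ (forall r, (k < r)%N -> (r <= n)%N ->
        (forall Y, Y \in V2 k x -> #|Y| = r -> HBdeg k x Y = 'C(r, k))
        /\ #|[set Y in V2 k x | #|Y| == r]| = (2 ^ (r - 1) * 'C(n, r))%N)
  (* degree sequence *)
  /\ sort geq [seq HBdeg k x v | v <- enum (HBvert k x)]
     = sort geq (claimed_degrees n k).
Proof.
have degV1 := deg_V1 hpos hinc hk1; have degV2 := @deg_V2 R n k x hpos hinc.
have cardV2 := card_V2_of_size hpos hinc hk1.
split; first by split=> [X XV1|]; [rewrite degV1 // dV1E | exact: card_V1].
split=> [r r1 rk|].
  split=> [Y YV2 Yr|]; first by rewrite degV2 // Yr /dV2 rk.
  by rewrite cardV2 // /mV2 (ltn_eqF rk).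
split.
  split=> [Y YV2 Yk|]; first by rewrite degV2 // Yk /dV2 ltnn eqxx.
  by rewrite cardV2 // /mV2 eqxx.
split=> [r kr rn|].
  split=> [Y YV2 Yr|]; first by rewrite degV2 // Yr /dV2 ltnNge (ltnW kr) (gtn_eqF kr).
  by rewrite cardV2 ?(leq_trans hk1 (ltnW kr)) // /mV2 (gtn_eqF kr).
apply/perm_sortP; last exact: perm_eq_HBdeg.
- by move=> a b; exact: leq_total.
- by move=> a b c ba cb; exact: leq_trans cb ba.
- by move=> a b /andP[ba ab]; apply/anti_leq/andP; split; [exact: ab | exact: ba].
Qed.
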